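(* Let $n\ge 2$ and let $S=[A_0,\dots,A_n]$ be an $n$-pre-kite. If the circumcenter and the incenter of $S$ coincide, then $S$ is a regular $n$-simplex.
   Context: An $n$-simplex is the convex hull of $n+1$ affinely independent points in a Euclidean space. It is an $n$-pre-kite if one of its facets (the $(n-1)$-simplex obtained by deleting one vertex) is a regular $(n-1)$-simplex, i.e. has all edges of equal length. The circumcenter of $S$ is the center of the $(n-1)$-sphere in the affine hull of $S$ passing through all vertices; the incenter is the center of the $(n-1)$-sphere in the affine hull of $S$ touching every facet at a point of that facet's convex hull. $S$ is regular if all its edges have the same length. *)

From HB Require Import structures.
From mathcomp Require Import all_boot all_order all_algebra.
From mathcomp Require Import reals.
Set Implicit Arguments. Unset Strict Implicit. Unset Printing Implicit Defensive.
Import Order.TTheory GRing.Theory Num.Theory.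
Local Open Scope ring_scope.

Section Simplex.
Variables (R : realType) (d : nat).

Definition dotv (u v : 'rV[R]_d) : R := (u *m v^T) 0 0.
Definition dist2 (u v : 'rV[R]_d) : R := dotv (u - v) (u - v).

Definition aff_indep (n : nat) (A : 'I_n.+1 -> 'rV[R]_d) : Prop :=
  row_free (\matrix_(i < n) (A (lift ord0 i) - A ord0)).

Definition in_aff_hull (n : nat) (A : 'I_n.+1 -> 'rV[R]_d) (P : pred 'I_n.+1)
  (x : 'rV[R]_d) : Prop :=
  exists c : 'I_n.+1 -> R,
    [/\ forall i, ~~ P i -> c i = 0,
        \sum_i c i = 1 & x = \sum_i c i *: A i].

Definition in_conv_hull (n : nat) (A : 'I_n.+1 -> 'rV[R]_d) (P : pred 'I_n.+1)
  (x : 'rV[R]_d) : Prop :=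
  exists c : 'I_n.+1 -> R,
    [/\ forall i, ~~ P i -> c i = 0, forall i, 0 <= c i,
        \sum_i c i = 1 & x = \sum_i c i *: A i].

Definition simplex (n : nat) (A : 'I_n.+1 -> 'rV[R]_d) : Prop := aff_indep A.

(* S is an n-pre-kite: some facet (delete vertex k) is a regular (n-1)-simplex *)
Definition pre_kite (n : nat) (A : 'I_n.+1 -> 'rV[R]_d) : Prop :=
  simplex A /\
  exists k : 'I_n.+1, forall i j i' j' : 'I_n.+1,
    i != k -> j != k -> i' != k -> j' != k -> i != j -> i' != j' ->
    dist2 (A i) (A j) = dist2 (A i') (A j').

Definition regular_simplex (n : nat) (A : 'I_n.+1 -> 'rV[R]_d) : Prop :=
  forall i j i' j' : 'I_n.+1, i != j -> i' != j' ->
    dist2 (A i) (A j) = dist2 (A i') (A j').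

Definition is_circumcenter (n : nat) (A : 'I_n.+1 -> 'rV[R]_d) (O : 'rV[R]_d) : Prop :=
  in_aff_hull A predT O /\ exists r : R, forall i, dist2 (A i) O = r ^+ 2.

(* I is the incenter: center of a sphere (radius r > 0) in the affine hull touching
   every facet (the facet opposite vertex j) at a point of that facet's convex hull:
   the touching point lies on the sphere and in conv(facet), and the sphere does not
   cross the facet's affine hull (tangency). *)
Definition is_incenter (n : nat) (A : 'I_n.+1 -> 'rV[R]_d) (I : 'rV[R]_d) : Prop :=
  in_aff_hull A predT I /\
  exists r : R, 0 < r /\ forall j : 'I_n.+1,
    exists P : 'rV[R]_d,
      [/\ in_conv_hull A (predC1 j) P, dist2 P I = r ^+ 2 &
          forall x, in_aff_hull A (predC1 j) x -> r ^+ 2 <= dist2 x I].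

End Simplex.

From mathcomp Require Import all_boot all_order all_algebra.
From mathcomp Require Import reals.
From mathcomp Require Import ring lra.
Set Implicit Arguments. Unset Strict Implicit. Unset Printing Implicit Defensive.
Import Order.TTheory GRing.Theory Num.Theory.
Local Open Scope ring_scope.

(* Let X be the common centre and G the Gram matrix of the vectors A_i - X.
   The circumsphere and the regular facet opposite A_k give G_ii = al + be and
   G_il = be for distinct i, l <> k, where al = a^2/2 > 0 for the edge length
   a of that facet; only the offsets D_l = G_kl - be (l <> k) are unknown, and
   the simplex is regular iff they all vanish.  The point where the insphere touches a facet has inner product r^2
   with every vertex of that facet, a linear condition on its barycentric
   coordinates.  The facet opposite A_k gives n (r^2 - be) = al; with
   s = al - sum D, every other facet j then gives s + D_j > 0 and
   sum D^2 = al^2 - s^2 - 2 s D_j.  If s = 0, all D_j are positive and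
   sum D^2 = (sum D)^2, impossible with n >= 2 terms; otherwise all D_j are
   equal and the last relation forces them to vanish. *)

Section InnerProduct.
Variables (R : realType) (d : nat).
Implicit Types (u v w X : 'rV[R]_d).

Lemma dotvE u v : dotv u v = \sum_i u 0 i * v 0 i.
Proof. by rewrite /dotv !mxE; apply: eq_bigr => i _; rewrite mxE. Qed.

Lemma dotvC u v : dotv u v = dotv v u.
Proof. by rewrite /dotv -[u *m v^T]trmxK trmx_mul trmxK mxE. Qed.

Lemma dotvDl u v w : dotv (u + v) w = dotv u w + dotv v w.
Proof. by rewrite /dotv mulmxDl mxE. Qed.

Lemma dotvBl u v w : dotv (u - v) w = dotv u w - dotv v w.
Proof. by rewrite /dotv mulmxBl !mxE. Qed.

Lemma dotvZl a u v : dotv (a *: u) v = a * dotv u v.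
Proof. by rewrite /dotv -scalemxAl mxE. Qed.

Lemma dotvDr u v w : dotv u (v + w) = dotv u v + dotv u w.
Proof. by rewrite dotvC dotvDl !(dotvC u). Qed.

Lemma dotvBr u v w : dotv u (v - w) = dotv u v - dotv u w.
Proof. by rewrite dotvC dotvBl !(dotvC u). Qed.

Lemma dotvZr a u v : dotv u (a *: v) = a * dotv u v.
Proof. by rewrite dotvC dotvZl dotvC. Qed.

Lemma dotv_suml (I : finType) (F : I -> 'rV[R]_d) v :
  dotv (\sum_i F i) v = \sum_i dotv (F i) v.
Proof. by rewrite /dotv mulmx_suml summxE. Qed.

Lemma dotvv_ge0 u : 0 <= dotv u u.
Proof. by rewrite dotvE sumr_ge0 // => i _; rewrite -expr2 sqr_ge0. Qed.

Lemma dotvv_eq0 u : (dotv u u == 0) = (u == 0).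
Proof.
apply/eqP/eqP => [|->]; last by rewrite dotvE big1 // => i _; rewrite mxE mul0r.
rewrite dotvE => /psumr_eq0P uu0; apply/rowP => i; rewrite mxE.
by apply/eqP; rewrite -sqrf_eq0 expr2 uu0 // => j _; rewrite -expr2 sqr_ge0.
Qed.

Lemma dist2_gt0 u v : u != v -> 0 < dist2 u v.
Proof. by rewrite lt_def dotvv_ge0 dotvv_eq0 subr_eq0 andbT. Qed.

Lemma dist2_center X u v :
  dist2 u v = dist2 u X + dist2 v X - 2 * dotv (u - X) (v - X).
Proof.
rewrite /dist2 (_ : u - v = (u - X) - (v - X)); last by rewrite opprB addrA subrK.
move: (u - X) (v - X) => x y.
by rewrite dotvBl !dotvBr (dotvC y x); ring.
Qed.

End InnerProduct.

Lemma quad_ge0_eq0 (R : realFieldType) (q s : R) :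
  0 <= s -> (forall t, 0 <= 2 * t * q + t ^+ 2 * s) -> q = 0.
Proof.
move=> s_ge0 quad_ge0.
have s1_neq0 : s + 1 != 0 by rewrite lt0r_neq0 // ltr_wpDl.
pose t := - q / (s + 1).
have q_t : q = - (t * (s + 1)) by rewrite /t divfK // opprK.
have t0 : t = 0.
  apply/eqP; rewrite -sqrf_eq0 eq_le sqr_ge0 andbT.
  by have := quad_ge0 t; have := mulr_ge0 (sqr_ge0 t) s_ge0; rewrite q_t; nra.
by rewrite q_t t0 mul0r oppr0.
Qed.

Lemma sum_sqr_lt_sqr_sum (R : numDomainType) (I : finType) (P : pred I)
    (f : I -> R) i j :
  P i -> P j -> i != j -> (forall l, P l -> 0 < f l) ->
  \sum_(l | P l) f l ^+ 2 < (\sum_(l | P l) f l) ^+ 2.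
Proof.
move=> Pi Pj ij f_gt0.
have f_ge0 l : P l -> 0 <= f l by move/f_gt0/ltW.
have le_sum l : P l -> f l <= \sum_(m | P m) f m.
  move=> Pl; rewrite (bigD1 l) //= lerDl.
  by apply: sumr_ge0 => m /andP[/f_ge0].
have lt_sum : f i < \sum_(m | P m) f m.
  rewrite (bigD1 i) //= ltrDl (lt_le_trans (f_gt0 j Pj)) // (bigD1 j) /=.
    by rewrite lerDl; apply: sumr_ge0 => m /andP[/andP[/f_ge0]].
  by rewrite Pj eq_sym.
rewrite [X in _ < X]expr2 mulr_suml (bigD1 i) //= [X in _ < X](bigD1 i) //=.
apply: ltr_leD; first by rewrite expr2 ltr_pM2l // f_gt0.
apply: ler_sum => l /andP[Pl _].
by rewrite expr2 ler_wpM2l ?le_sum ?f_ge0.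
Qed.

Lemma kite_offsets_eq0 (R : realFieldType) (I : finType) (P : pred I) (f : I -> R) a :
  (1 < #|P|)%N -> 0 < a ->
  (forall j, P j ->
     0 < a - \sum_(i | P i) f i + f j /\
     \sum_(i | P i) f i ^+ 2 =
       a ^+ 2 - (a - \sum_(i | P i) f i) ^+ 2 - 2 * (a - \sum_(i | P i) f i) * f j) ->
  forall j, P j -> f j = 0.
Proof.
move=> card_gt1 a_gt0 h; have /card_gt1P[j1 [j2 [Pj1 Pj2 j12]]] := card_gt1.
set S := \sum_(i | P i) f i in h *; set Q := \sum_(i | P i) f i ^+ 2 in h *.
have [S_a | S_neq_a] := eqVneq S a.
  have f_gt0 i : P i -> 0 < f i by move=> /h[+ _]; rewrite S_a subrr add0r.
  have [_] := h j1 Pj1; rewrite S_a subrr expr0n mulr0 mul0r !subr0 => Q_a.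
  by have := sum_sqr_lt_sqr_sum Pj1 Pj2 j12 f_gt0; rewrite -/S -/Q Q_a S_a ltxx.
have f_const i : P i -> f i = f j1.
  move=> Pi; have [_ e] := h i Pi; have [_ e1] := h j1 Pj1.
  apply: (mulfI (_ : 2 * (a - S) != 0)); last by lra.
  by rewrite mulf_eq0 pnatr_eq0 subr_eq0 /= eq_sym.
set N : R := #|P|%:R.
have S_N : S = N * f j1 by rewrite /S (eq_bigr _ f_const) sumr_const mulr_natl.
have Q_N : Q = N * f j1 ^+ 2.
  by rewrite /Q (eq_bigr (fun=> f j1 ^+ 2)) ?sumr_const ?mulr_natl // => i /f_const ->.
have N_ge2 : 2 <= N by rewrite ler_nat.
have [pos e] := h j1 Pj1; rewrite S_N Q_N in pos e.
suff f1_0 : f j1 = 0 by move=> j /f_const ->.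
have : (N - 1) * f j1 * (2 * a - N * f j1) = 0 by lra.
move/eqP; rewrite !mulf_eq0 subr_eq0 => /orP[/orP[/eqP N1|/eqP //]|/eqP Nf].
  by lra.
have f1_gt_a : a < f j1 by lra.
have : 0 <= (N - 2) * f j1 by rewrite mulr_ge0 ?subr_ge0 //; lra.
lra.
Qed.

Lemma sumr_eq_except1 (V : zmodType) (I : finType) (P : pred I) (F g : I -> V) j :
  P j -> (forall l, P l -> l != j -> F l = g l) ->
  \sum_(l | P l) F l = F j - g j + \sum_(l | P l) g l.
Proof.
move=> Pj Fg; rewrite (bigD1 j Pj) [in RHS](bigD1 j Pj) /= addrA subrK.
by congr (_ + _); apply: eq_bigr => l /andP[]; exact: Fg.
Qed.

(* [gram_foot G rho j c]: when G is the Gram matrix of the vectors A_i - X,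
   c are barycentric coordinates, in the facet opposite A_j, of a point F with
   <F - X, A_l - X> = rho for every vertex A_l of that facet. *)
Definition gram_foot (R : pzSemiRingType) n (G : 'I_n.+1 -> 'I_n.+1 -> R) (rho : R)
    (j : 'I_n.+1) (c : 'I_n.+1 -> R) : Prop :=
  [/\ c j = 0, \sum_i c i = 1 & forall l, l != j -> \sum_m c m * G m l = rho].

Section KiteGram.
Variables (R : realFieldType) (n : nat) (k : 'I_n.+1).
Variables (G : 'I_n.+1 -> 'I_n.+1 -> R) (al be rho : R).
Hypotheses (al_gt0 : 0 < al) (G_diag : forall i, G i i = al + be)
  (G_facet : forall i l, i != k -> l != k -> i != l -> G i l = be)
  (G_sym : forall i l, G i l = G l i).

Let D l := G k l - be.
Let S := \sum_(l | l != k) D l.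
Let Q := \sum_(l | l != k) D l ^+ 2.

Lemma sum_predC1_const (x : R) : \sum_(l | l != k) x = n%:R * x.
Proof. by rewrite sumr_const cardC1 card_ord mulr_natl. Qed.

Lemma sum_gram_col c l : \sum_i c i = 1 -> l != k ->
  \sum_m c m * G m l = be + al * c l + c k * D l.
Proof.
move=> c1 lk; rewrite (bigD1 k) //= (bigD1 l) ?lk //= G_diag.
have sum_rest : \sum_(m | (m != k) && (m != l)) c m = 1 - c k - c l.
  by move: c1; rewrite (bigD1 k) //= (bigD1 l) ?lk //=; lra.
rewrite (eq_bigr (fun m => c m * be)); last first.
  by move=> m /andP[mk ml]; rewrite G_facet.
by rewrite -mulr_suml sum_rest /D; ring.
Qed.

Lemma foot_facet_k c : gram_foot G rho k c -> n%:R * (rho - be) = al.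
Proof.
move=> [ck c1 foot].
have c_facet l : l != k -> al * c l = rho - be.
  by move=> lk; rewrite -(foot l lk) sum_gram_col // ck; ring.
rewrite -sum_predC1_const -(eq_bigr _ c_facet) -mulr_sumr.
by move: c1; rewrite (bigD1 k) //= ck add0r => ->; rewrite mulr1.
Qed.

Lemma foot_facet_neq_k j c : j != k -> 0 <= c k -> gram_foot G rho j c ->
  n%:R * (rho - be) = al ->
  0 < al - S + D j /\ Q = al ^+ 2 - (al - S) ^+ 2 - 2 * (al - S) * D j.
Proof.
move=> jk ck_ge0 [cj c1 foot]; set x := rho - be => n_x.
have c_facet l : l != k -> l != j -> al * c l + c k * D l = x.
  by move=> lk lj; rewrite /x -(foot l lj) sum_gram_col //; ring.
have c_out : \sum_(l | l != k) c l = 1 - c k by move: c1; rewrite (bigD1 k) //=; lra.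
have sum_c : al * (1 - c k) + c k * S = c k * D j - x + n%:R * x.
  rewrite -c_out /S mulr_sumr mulr_sumr -big_split /=.
  rewrite (sumr_eq_except1 (g := fun=> x) _ c_facet) //.
  by rewrite sum_predC1_const cj mulr0 add0r.
have foot_at_k : c k * al + \sum_(l | l != k) c l * D l = x.
  have := foot k; rewrite eq_sym => /(_ jk); rewrite (bigD1 k) //= G_diag.
  have -> : \sum_(m | m != k) c m * G m k =
            be * (1 - c k) + \sum_(m | m != k) c m * D m.
    rewrite -c_out mulr_sumr -big_split /=.
    by apply: eq_bigr => m _; rewrite G_sym /D; ring.
  rewrite /x; lra.
have sum_cD :
    al * \sum_(l | l != k) c l * D l + c k * Q = c k * D j ^+ 2 - x * D j + x * S.
  rewrite /Q /S !mulr_sumr -big_split /=.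
  rewrite (sumr_eq_except1 (g := fun l => x * D l) (j := j)) // ?cj; first by ring.
  by move=> l lk lj; rewrite -(c_facet l lk lj); ring.
rewrite n_x in sum_c.
have x_gt0 : 0 < x.
  rewrite ltNge; apply/negP => x_le0.
  by move: al_gt0; rewrite -n_x ltNge (mulr_ge0_le0 (ler0n _ _) x_le0).
have x_ce : x = c k * (al - S + D j) by lra.
have ck_gt0 : 0 < c k.
  rewrite lt_def ck_ge0 andbT; apply: contraTneq x_gt0 => ck0.
  by rewrite x_ce ck0 mul0r ltxx.
split; first by rewrite -(pmulr_rgt0 _ ck_gt0) -x_ce.
apply: (mulfI (lt0r_neq0 ck_gt0)).
have := congr1 (fun z => z * (al - S + D j)) x_ce.
have := congr1 (fun z => al * z) foot_at_k.
rewrite /=; lra.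
Qed.

Hypotheses (n_ge2 : (2 <= n)%N)
  (feet : forall j, exists2 c, gram_foot G rho j c & 0 <= c k).

Lemma kite_gram_offdiag i l : i != l -> G i l = be.
Proof.
have [c fk _] := feet k.
have D0 l' : l' != k -> D l' = 0.
  apply: (@kite_offsets_eq0 _ _ (predC1 k) D al); rewrite ?cardC1 ?card_ord //.
  move=> j jk; have [c' fj ck] := feet j.
  exact: foot_facet_neq_k jk ck fj (foot_facet_k fk).
have [-> | ik] := eqVneq i k.
  by rewrite eq_sym => lk; apply/subr0_eq/D0.
have [-> | lk] := eqVneq l k.
  by move=> _; rewrite G_sym; apply/subr0_eq/D0.
exact: G_facet.
Qed.

End KiteGram.

Section Facets.
Variables (R : realType) (d n : nat) (A : 'I_n.+1 -> 'rV[R]_d).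

Lemma in_aff_hull_line (P : pred 'I_n.+1) x l t :
  in_aff_hull A P x -> P l -> in_aff_hull A P (x + t *: (A l - x)).
Proof.
move=> [c [c0 c1 ->]] Pl.
have sum_delta (F : 'I_n.+1 -> 'rV[R]_d) : \sum_m (m == l)%:R *: F m = F l.
  by rewrite (bigD1 l) //= eqxx scale1r big1 ?addr0 // => m /negPf->; rewrite scale0r.
exists (fun m => c m + t * ((m == l)%:R - c m)); split.
- move=> m Pm; have /negPf ml : m != l by apply: contraNneq Pm => ->.
  by rewrite c0 // ml subrr mulr0 addr0.
- rewrite big_split /= -mulr_sumr sumrB c1.
  rewrite [X in X - 1](bigD1 l) //= eqxx big1 => [|m /negPf-> //].
  by rewrite addr0 subrr mulr0 addr0.
- symmetry; under eq_bigr do rewrite scalerDl -scalerA scalerBl.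
  by rewrite big_split /= -scaler_sumr sumrB sum_delta.
Qed.

Lemma dotv_sum_affine X v (c : 'I_n.+1 -> R) : \sum_i c i = 1 ->
  dotv (\sum_i c i *: A i - X) v = \sum_i c i * dotv (A i - X) v.
Proof.
move=> c1; have -> : \sum_i c i *: A i - X = \sum_i c i *: (A i - X).
  by symmetry; under eq_bigr do rewrite scalerBr; rewrite sumrB -scaler_suml c1 scale1r.
by rewrite dotv_suml; apply: eq_bigr => i _; exact: dotvZl.
Qed.

(* A point p of an affine subspace nearest to X is the foot of the
   perpendicular from X, so p - X is orthogonal to every A l - p. *)
Lemma dotv_tangent (P : pred 'I_n.+1) X p r l :
  in_aff_hull A P p -> dist2 p X = r ^+ 2 ->
  (forall x, in_aff_hull A P x -> r ^+ 2 <= dist2 x X) -> P l ->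
  dotv (p - X) (A l - X) = r ^+ 2.
Proof.
move=> hull_p p_r p_min Pl; set w := A l - p.
have orth : dotv (p - X) w = 0.
  apply: (quad_ge0_eq0 (dotvv_ge0 w)) => t.
  have := p_min _ (in_aff_hull_line t hull_p Pl); rewrite -/w /dist2.
  rewrite (_ : p + t *: w - X = (p - X) + t *: w); last by rewrite addrAC.
  move: p_r; rewrite /dist2; move: (p - X) => u u_r; clearbody w.
  by rewrite dotvDl !dotvDr !dotvZl !dotvZr (dotvC w) u_r; lra.
rewrite (_ : A l - X = (p - X) + w); last by rewrite /w [RHS]addrC addrA subrK.
by rewrite dotvDr orth addr0.
Qed.

Lemma incenter_gram_foot X r :
  (forall j, exists P, [/\ in_conv_hull A (predC1 j) P, dist2 P X = r ^+ 2 &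
     forall x, in_aff_hull A (predC1 j) x -> r ^+ 2 <= dist2 x X]) ->
  forall j, exists2 c, gram_foot (fun i l => dotv (A i - X) (A l - X)) (r ^+ 2) j c &
    forall i, 0 <= c i.
Proof.
move=> tangent j; have [P [[c [c0 c_ge0 c1 ->]] P_r P_min]] := tangent j.
exists c => //; split=> [|//|l lj]; first by apply: c0; rewrite /= eqxx.
rewrite -dotv_sum_affine //; apply: dotv_tangent P_r P_min lj.
by exists c.
Qed.

Lemma aff_indep_inj : aff_indep A -> injective A.
Proof.
move=> /row_freeP[B MB].
pose e i := (A i - A ord0) *m B.
have eE i m : e i 0 m = (i == lift ord0 m)%:R.
  case: (unliftP ord0 i) => [i'|] ->.
    rewrite /e -(rowK (fun m => A (lift ord0 m) - A ord0)) -row_mul MB row1 mxE.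
    by rewrite eqxx (inj_eq lift_inj) eq_sym.
  by rewrite /e subrr mul0mx mxE (negPf (neq_lift _ _)).
move=> i l Ail; have eil m : (i == lift ord0 m)%:R = (l == lift ord0 m)%:R :> R.
  by rewrite -!eE /e Ail.
case: (unliftP ord0 i) eil => [i'|] -> eil.
  by have := eil i'; rewrite eqxx; case: eqP => // _ /eqP; rewrite oner_eq0.
case: (unliftP ord0 l) eil => [l'|] -> eil //.
by have := eil l'; rewrite eqxx (negPf (neq_lift _ _)) => /eqP; rewrite eq_sym oner_eq0.
Qed.

End Facets.

Unset Implicit Arguments.

Theorem theorem6p3 (R : realType) (d n : nat) (A : 'I_n.+1 -> 'rV[R]_d) :
  (2 <= n)%N -> pre_kite A ->
  (forall X : 'rV[R]_d, is_circumcenter A X -> is_incenter A X -> regular_simplex A).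
Proof.
move=> n_ge2 [A_indep [k facet_reg]] X [_ [r0 circ]] [_ [r [_ tangent]]].
have /card_gt1P[i0 [l0 [i0k l0k i0l0]]] : (1 < #|predC1 k|)%N.
  by rewrite cardC1 card_ord.
pose G i l := dotv (A i - X) (A l - X).
have dist2G i l : dist2 (A i) (A l) = 2 * r0 ^+ 2 - 2 * G i l.
  by rewrite (dist2_center X) !circ /G; ring.
pose al := dist2 (A i0) (A l0) / 2; pose be := r0 ^+ 2 - al.
have al_gt0 : 0 < al.
  by rewrite divr_gt0 // dist2_gt0 // (inj_eq (aff_indep_inj A_indep)).
have G_diag i : G i i = al + be by rewrite /be addrC subrK; exact: circ.
have G_facet i l : i != k -> l != k -> i != l -> G i l = be.
  move=> ik lk il; have := facet_reg i l i0 l0 ik lk i0k l0k il i0l0.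
  by rewrite /be /al [in LHS]dist2G => <-; lra.
have feet j : exists2 c, gram_foot G (r ^+ 2) j c & 0 <= c k.
  by have [c ? /(_ k)] := incenter_gram_foot tangent j; exists c.
have G_offdiag :=
  kite_gram_offdiag al_gt0 G_diag G_facet (fun i l => dotvC _ _) n_ge2 feet.
by move=> i j i' j' ij i'j'; rewrite !dist2G !G_offdiag.
Qed.
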